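(* Let $M$ be a common memory consistency model and $X$ an execution. For every relation $r$ defined in $M$ (evaluated on $X$) and all events $e_1, e_2$ of $X$: if $(e_1,e_2)\in r$, then $(e_1, e_2) \in b^*$, where $b := po\cup rf\cup co\cup ad\cup dd\cup cd\cup fr$ and $b^*$ is its reflexive-transitive closure (i.e. there is a path, possibly of length $0$, from $e_1$ to $e_2$ consisting of $b$-edges).
   Context: An execution $X$ consists of executed memory events (reads and writes, with an initial write per location), the program order $po$, address/data/control dependencies $ad, dd, cd\subseteq po$, fence relations (each $\subseteq po$), relations $sthd$ (same thread) and $sloc$ (same location), reads-from $rf$ and coherence order $co$; $fr := rf^{-1};co$. A memory consistency model in the core CAT language is a finite set of named relation definitions $\mathit{name} := t$, where terms $t$ are built from $po, rf, co, ad, dd, cd, sthd, sloc$, fence relations, $id(S)$ and $S\times S$ for event sets $S\in\{E,R,W\}$, and names, using $\cup,\cap,\setminus,^{-1},^+,^*,;$ (relational composition); mutually recursive definitions are interpreted as their least solution (obtained by Kleene iteration from empty relations); plus axioms $\mathrm{acyclic}(t)$ / $\mathrm{irreflexive}(t)$. SC is the model with the single axiom $\mathrm{acyclic}(po\cup rf\cup co\cup fr)$. A model is common if (i) the inverse operator is used only in the definition $fr := rf^{-1};co$; (ii) $sthd$, $sloc$ and $S\times S$ are only used intersected with other relations; (iii) it includes uniproc: $\mathrm{acyclic}((po\cap sloc)\cup rf\cup fr\cup co)$; (iv) every program is portable from it to SC (every execution consistent with it is SC-consistent). *)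

From Stdlib Require Import Relations List String.
Import ListNotations.
Open Scope string_scope.

Record execution := mkExec {
  ev     : Type;
  isR    : ev -> Prop;
  isW    : ev -> Prop;
  isInit : ev -> Prop;
  loc    : ev -> nat;
  tid    : ev -> nat;            (* thread of a non-initial event *)
  po     : relation ev;
  rf     : relation ev;
  co     : relation ev;
  ad     : relation ev;
  dd     : relation ev;
  cd     : relation ev;
  fence  : nat -> relation ev;   (* fence relations, indexed by fence kind *)
  sthd   : relation ev;
  sloc   : relation ev }.


Definition fr (X : execution) : relation (ev X) :=
  fun a b => exists r, rf X r a /\ co X r b.

Definition wf_exec (X : execution) : Prop :=
  (forall e, (isR X e /\ ~ isW X e) \/ (isW X e /\ ~ isR X e)) /\
  (forall e, isInit X e -> isW X e) /\
  (forall e, exists i, isInit X i /\ loc X i = loc X e) /\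
  (forall i j, isInit X i -> isInit X j -> loc X i = loc X j -> i = j) /\
  (forall a b, sloc X a b <-> loc X a = loc X b) /\
  (forall a b, sthd X a b <->
     (~ isInit X a /\ ~ isInit X b /\ tid X a = tid X b)) /\
  (forall a, ~ po X a a) /\
  (forall a b c, po X a b -> po X b c -> po X a c) /\
  (forall a b, po X a b -> (isInit X a /\ ~ isInit X b) \/ sthd X a b) /\
  (forall a b, sthd X a b -> a <> b -> po X a b \/ po X b a) /\
  (forall a b, isInit X a -> ~ isInit X b -> po X a b) /\
  (forall a b, ad X a b -> po X a b /\ isR X a) /\
  (forall a b, dd X a b -> po X a b /\ isR X a) /\
  (forall a b, cd X a b -> po X a b /\ isR X a) /\
  (forall n a b, fence X n a b -> po X a b) /\
  (forall a b, rf X a b -> isW X a /\ isR X b /\ loc X a = loc X b) /\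
  (forall r, isR X r -> exists w, rf X w r /\ forall w', rf X w' r -> w' = w) /\
  (forall a b, co X a b -> isW X a /\ isW X b /\ loc X a = loc X b) /\
  (forall a, ~ co X a a) /\
  (forall a b c, co X a b -> co X b c -> co X a c) /\
  (forall a b, isW X a -> isW X b -> loc X a = loc X b -> a <> b ->
     co X a b \/ co X b a) /\
  (forall a b, isInit X a -> isW X b -> loc X a = loc X b -> a <> b ->
     co X a b).

Inductive evset := SetE | SetR | SetW.

Inductive term :=
  | TPo | TRf | TCo | TAd | TDd | TCd | TSthd | TSloc
  | TFence (n : nat)
  | TId (s : evset)
  | TProd (s : evset)
  | TName (x : string)
  | TUnion (t u : term)
  | TInter (t u : term)
  | TDiff (t u : term)
  | TInv (t : term)
  | TPlus (t : term)
  | TStar (t : term)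
  | TSeq (t u : term).

Inductive axiom := Acyclic (t : term) | Irreflexive (t : term).

Record model := mkModel {
  defs   : list (string * term);   (* named (possibly mutually recursive) definitions *)
  axioms : list axiom }.

Definition inset (X : execution) (s : evset) (e : ev X) : Prop :=
  match s with SetE => True | SetR => isR X e | SetW => isW X e end.

Definition acyclic {A} (r : relation A) : Prop := forall x, ~ clos_trans A r x x.
Definition irreflexive {A} (r : relation A) : Prop := forall x, ~ r x x.

Fixpoint eval (X : execution) (env : string -> relation (ev X)) (t : term)
  : relation (ev X) :=
  match t with
  | TPo => po X | TRf => rf X | TCo => co X
  | TAd => ad X | TDd => dd X | TCd => cd X
  | TSthd => sthd X | TSloc => sloc X
  | TFence n => fence X n
  | TId s => fun a b => a = b /\ inset X s a
  | TProd s => fun a b => inset X s a /\ inset X s b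
  | TName x => env x
  | TUnion t u => fun a b => eval X env t a b \/ eval X env u a b
  | TInter t u => fun a b => eval X env t a b /\ eval X env u a b
  | TDiff t u => fun a b => eval X env t a b /\ ~ eval X env u a b
  | TInv t => fun a b => eval X env t b a
  | TPlus t => clos_trans _ (eval X env t)
  | TStar t => clos_refl_trans _ (eval X env t)
  | TSeq t u => fun a b => exists c, eval X env t a c /\ eval X env u c b
  end.

Fixpoint lookup (ds : list (string * term)) (x : string) : option term :=
  match ds with
  | [] => None
  | (y, t) :: ds' => if String.eqb x y then Some t else lookup ds' x
  end.

Fixpoint kleene (M : model) (X : execution) (k : nat) : string -> relation (ev X) :=
  match k with
  | O => fun _ _ _ => False
  | S k' => fun x => match lookup (defs M) x with
                     | Some t => eval X (kleene M X k') t
                     | None => fun _ _ => False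
                     end
  end.

Definition sem (M : model) (X : execution) : string -> relation (ev X) :=
  fun x a b => exists k, kleene M X k x a b.

Definition holds (X : execution) (env : string -> relation (ev X)) (ax : axiom) : Prop :=
  match ax with
  | Acyclic t => acyclic (eval X env t)
  | Irreflexive t => irreflexive (eval X env t)
  end.

Definition consistent (M : model) (X : execution) : Prop :=
  forall ax, In ax (axioms M) -> holds X (sem M X) ax.

Definition sc_consistent (X : execution) : Prop :=
  acyclic (fun a b => po X a b \/ rf X a b \/ co X a b \/ fr X a b).

Inductive filt : term -> Prop :=
  | filt_sthd : filt TSthd
  | filt_sloc : filt TSloc
  | filt_prod s : filt (TProd s)
  | filt_inter t u : filt t -> filt u -> filt (TInter t u).

(* terms with no inverse, in which sthd, sloc, S x S occur only intersected
   with another (non-filter) relation *)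
Inductive okT : term -> Prop :=
  | ok_po : okT TPo | ok_rf : okT TRf | ok_co : okT TCo
  | ok_ad : okT TAd | ok_dd : okT TDd | ok_cd : okT TCd
  | ok_fence n : okT (TFence n)
  | ok_id s : okT (TId s)
  | ok_name x : okT (TName x)
  | ok_union t u : okT t -> okT u -> okT (TUnion t u)
  | ok_inter t u : okT t -> okT u -> okT (TInter t u)
  | ok_inter_fl t u : filt t -> okT u -> okT (TInter t u)
  | ok_inter_fr t u : okT t -> filt u -> okT (TInter t u)
  | ok_diff t u : okT t -> okT u -> okT (TDiff t u)
  | ok_plus t : okT t -> okT (TPlus t)
  | ok_star t : okT t -> okT (TStar t)
  | ok_seq t u : okT t -> okT u -> okT (TSeq t u).

Definition fr_def : string * term := ("fr", TSeq (TInv TRf) TCo).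

Definition axiom_term (ax : axiom) : term :=
  match ax with Acyclic t => t | Irreflexive t => t end.

Definition common (M : model) : Prop :=
  (* (i),(ii) for definitions: inverse only in fr := rf^-1;co *)
  (forall d, In d (defs M) -> d = fr_def \/ okT (snd d)) /\
  (forall ax, In ax (axioms M) -> okT (axiom_term ax)) /\
  (* (iii) uniproc is an axiom of M *)
  (exists t, In (Acyclic t) (axioms M) /\
     forall X, wf_exec X -> forall a b,
       eval X (sem M X) t a b <->
       ((po X a b /\ sloc X a b) \/ rf X a b \/ fr X a b \/ co X a b)) /\
  (* (iv) portability to SC *)
  (forall X, wf_exec X -> consistent M X -> sc_consistent X).

Definition bRel (X : execution) : relation (ev X) :=
  fun a b => po X a b \/ rf X a b \/ co X a b \/ ad X a b \/ dd X a b \/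
             cd X a b \/ fr X a b.

(* Every base relation except [fr] is a [b]-edge, fences are contained in [po], and
   [fr] only occurs as the definition [rf^-1;co], whose edges are [b]-edges.  Since
   no other term uses an inverse, every CAT operator maps subrelations of [b*] to
   subrelations of [b*] (identities are reflexive, and [sthd], [sloc], [S x S] only
   occur intersected with such a relation).  Induction over the Kleene iterates
   then shows that every defined relation is contained in [b*]. *)
From Stdlib Require Import Relations List String.

Lemma lookup_In ds x t : lookup ds x = Some t -> In (x, t) ds.
Proof.
  induction ds as [|[y u] ds IH]; simpl; [discriminate|].
  destruct (String.eqb_spec x y) as [-> | _].
  - intros [= <-]. now left.
  - intros H. right. auto.
Qed.

Lemma wf_fence_po X : wf_exec X -> forall n, inclusion _ (fence X n) (po X).
Proof. intros (_&_&_&_&_&_&_&_&_&_&_&_&_&_&Hf&_) n. exact (Hf n). Qed.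

Section EvalInclusion.

Variables (X : execution) (b : relation (ev X)).
Hypotheses (po_b : inclusion _ (po X) b) (rf_b : inclusion _ (rf X) b)
  (co_b : inclusion _ (co X) b) (ad_b : inclusion _ (ad X) b)
  (dd_b : inclusion _ (dd X) b) (cd_b : inclusion _ (cd X) b)
  (fence_po : forall n, inclusion _ (fence X n) (po X)).

Lemma eval_okT_incl env :
  (forall x, inclusion _ (env x) (clos_refl_trans _ b)) ->
  forall t, okT t -> inclusion _ (eval X env t) (clos_refl_trans _ b).
Proof.
  intros Henv t Ht.
  induction Ht; simpl; intros e1 e2 He;
    try (apply rt_step; auto; fail);
    try (destruct He; auto; fail).
  - apply rt_step, po_b. exact (fence_po n _ _ He).
  - destruct He as [-> _]. apply rt_refl.
  - exact (Henv x _ _ He).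
  - induction He; eauto using rt_trans.
  - induction He; eauto using rt_trans, rt_refl.
  - destruct He as (e & H1 & H2). eauto using rt_trans.
Qed.

End EvalInclusion.

Lemma fr_def_eval_bRel X env :
  inclusion _ (eval X env (snd fr_def)) (bRel X).
Proof.
  intros x y (z & Hzx & Hzy). unfold bRel, fr. eauto 10.
Qed.

Lemma kleene_incl_bRel_star M X :
  common M -> wf_exec X ->
  forall k x, inclusion _ (kleene M X k x) (clos_refl_trans _ (bRel X)).
Proof.
  intros [Hdefs _] HX k.
  induction k as [|k IH]; simpl; intros x e1 e2 Hk; [contradiction|].
  destruct (lookup (defs M) x) as [t|] eqn:Ht; [|contradiction].
  destruct (Hdefs _ (lookup_In _ _ _ Ht)) as [Hfr | Hok].
  - injection Hfr as _ ->. apply rt_step. exact (fr_def_eval_bRel _ _ _ _ Hk).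
  - revert e1 e2 Hk. apply (eval_okT_incl X (bRel X)); auto using wf_fence_po;
      unfold bRel; intros ? ? ?; tauto.
Qed.

Theorem mainTheorem3 (M : model) (HM : common M) (X : execution) (HX : wf_exec X)
  (r : string) (Hr : In r (map fst (defs M))) (e1 e2 : ev X) :
  sem M X r e1 e2 -> clos_refl_trans (ev X) (bRel X) e1 e2.
Proof.
  intros [k Hk]. exact (kleene_incl_bRel_star M X HM HX k r e1 e2 Hk).
Qed.
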